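(* Let $\pi>0$, $\bar d>0$, $0<\theta_1<\dots<\theta_K$, $0\le\beta_1<\dots<\beta_M\le1$, and $A:[0,D]\to[0,\bar d]$. For $(Q,\Pi)\in[0,D]\times\mathbb{R}$ and a type $(\beta,\theta)$ let $\bar S(Q,\Pi,\beta,\theta)=\theta[\bar d-\beta A(Q)]-\pi(1-\beta)A(Q)-\Pi$. Then the smallest-payoff user type $\Lambda_\epsilon(Q,\Pi)\in\arg\min_{(\beta_m,\theta_k)}\bar S(Q,\Pi,\beta_m,\theta_k)$ does not depend on $(Q,\Pi)$: there is a single type among the $KM$ types $(\beta_m,\theta_k)$ that minimizes $\bar S(Q,\Pi,\cdot)$ for every $(Q,\Pi)\in[0,D]\times\mathbb{R}$.
   Context: Model: $\pi$ is the overage price, $\bar d$ the mean monthly data demand, $A(Q)$ the expected overage data consumption under data cap $Q$; $\bar S$ is the expected payoff of a type-$(\beta,\theta)$ user (data valuation $\theta$, network substitutability $\beta$) under a plan with cap $Q$ and subscription fee $\Pi$. *)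

From mathcomp Require Import all_boot all_order all_algebra.
Set Implicit Arguments. Unset Strict Implicit. Unset Printing Implicit Defensive.
Import Order.TTheory GRing.Theory Num.Theory.
Local Open Scope ring_scope.

Definition Sbar (R : realFieldType) (pi dbar : R) (A : R -> R)
  (Q Pi beta theta : R) : R :=
  theta * (dbar - beta * A Q) - pi * (1 - beta) * A Q - Pi.

From mathcomp Require Import all_boot all_order all_algebra.
From mathcomp Require Import ring lra.
Import Order.TTheory GRing.Theory Num.Theory.
Local Open Scope ring_scope.

(* [Sbar] is nondecreasing in [theta], with slope [dbar - beta A(Q) >= 0], and
   affine in [beta], with slope [(pi - theta) A(Q)]. Hence the smallest
   valuation [theta_1] is always a minimiser in [theta], and for [theta_1] the
   sign of the slope in [beta] does not depend on [Q]: the minimiser is [beta_1]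
   when [theta_1 <= pi] and [beta_M] otherwise. *)

Section SbarMonotonicity.

Variables (R : realFieldType) (pi dbar : R) (A : R -> R) (Q Pi : R).

Lemma SbarB_theta (beta theta theta' : R) :
  Sbar pi dbar A Q Pi beta theta' - Sbar pi dbar A Q Pi beta theta
    = (theta' - theta) * (dbar - beta * A Q).
Proof. by rewrite /Sbar; ring. Qed.

Lemma SbarB_beta (beta beta' theta : R) :
  Sbar pi dbar A Q Pi beta' theta - Sbar pi dbar A Q Pi beta theta
    = (beta' - beta) * ((pi - theta) * A Q).
Proof. by rewrite /Sbar; ring. Qed.

Hypothesis AQ_ge0 : 0 <= A Q.

Lemma Sbar_le_theta (beta theta theta' : R) :
  0 <= beta <= 1 -> A Q <= dbar -> theta <= theta' ->
  Sbar pi dbar A Q Pi beta theta <= Sbar pi dbar A Q Pi beta theta'.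
Proof.
move=> /andP[beta_ge0 beta_le1] AQ_le le_theta; rewrite -subr_ge0 SbarB_theta.
have betaAQ_le : beta * A Q <= A Q by rewrite ler_piMl.
by apply: mulr_ge0; lra.
Qed.

Lemma Sbar_le_beta (beta beta' theta : R) :
  theta <= pi -> beta <= beta' ->
  Sbar pi dbar A Q Pi beta theta <= Sbar pi dbar A Q Pi beta' theta.
Proof.
move=> le_theta_pi le_beta; rewrite -subr_ge0 SbarB_beta.
by rewrite !mulr_ge0 // subr_ge0.
Qed.

Lemma Sbar_ge_beta (beta beta' theta : R) :
  pi <= theta -> beta <= beta' ->
  Sbar pi dbar A Q Pi beta' theta <= Sbar pi dbar A Q Pi beta theta.
Proof.
move=> le_pi_theta le_beta; rewrite -subr_ge0 SbarB_beta.
by rewrite -mulrNN -mulNr !opprB !mulr_ge0 // subr_ge0.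
Qed.

End SbarMonotonicity.

Theorem lemma2 (R : realFieldType) (pi dbar D : R) (A : R -> R)
  (K M : nat) (theta : 'I_K -> R) (beta : 'I_M -> R) :
  0 < pi -> 0 < dbar ->
  (0 < K)%N -> (0 < M)%N ->
  (forall k : 'I_K, 0 < theta k) ->
  (forall k k' : 'I_K, (k < k')%N -> theta k < theta k') ->
  (forall m : 'I_M, 0 <= beta m <= 1) ->
  (forall m m' : 'I_M, (m < m')%N -> beta m < beta m') ->
  (forall Q, 0 <= Q <= D -> 0 <= A Q <= dbar) ->
  exists (k0 : 'I_K) (m0 : 'I_M),
    forall Q Pi, 0 <= Q <= D ->
      forall (k : 'I_K) (m : 'I_M),
        Sbar pi dbar A Q Pi (beta m0) (theta k0)
          <= Sbar pi dbar A Q Pi (beta m) (theta k).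
Proof.
move=> _ _ K_gt0 M_gt0 _ theta_lt beta01 beta_lt A_bounds.
have theta_le := ltW_homo theta_lt; have beta_le := ltW_homo beta_lt.
pose k0 : 'I_K := Ordinal K_gt0.
pose mlo : 'I_M := Ordinal M_gt0.
have M_pred_lt : (M.-1 < M)%N by rewrite ltn_predL.
pose mhi : 'I_M := Ordinal M_pred_lt.
have theta_k0 k : theta k0 <= theta k by apply: theta_le.
have beta_mlo m : beta mlo <= beta m by apply: beta_le.
have beta_mhi m : beta m <= beta mhi by apply: beta_le; rewrite leEord -ltnS prednK.
have minimiser_from m0 : (forall Q Pi m, 0 <= A Q ->
    Sbar pi dbar A Q Pi (beta m0) (theta k0)
      <= Sbar pi dbar A Q Pi (beta m) (theta k0)) ->
  exists m0, forall Q Pi, 0 <= Q <= D -> forall k m,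
    Sbar pi dbar A Q Pi (beta m0) (theta k0)
      <= Sbar pi dbar A Q Pi (beta m) (theta k).
  move=> le_beta; exists m0 => Q Pi /A_bounds/andP[AQ_ge0 AQ_le] k m.
  apply: le_trans (le_beta Q Pi m AQ_ge0) _.
  by apply: Sbar_le_theta; [exact: AQ_ge0 | exact: beta01 | exact: AQ_le | exact: theta_k0].
exists k0; case: (lerP (theta k0) pi) => [le_theta_pi | /ltW le_pi_theta].
- by apply: (minimiser_from mlo) => Q Pi m AQ_ge0; apply: Sbar_le_beta.
- by apply: (minimiser_from mhi) => Q Pi m AQ_ge0; apply: Sbar_ge_beta.
Qed.
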